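(* Let $d\ge1$, $\mu\in\mathbb{R}^d$, $\Sigma\in\mathbb{R}^{d\times d}$ symmetric positive definite, $\alpha>0$, $\delta\in(0,1)$, and $Z\sim\mathcal{N}(\mu,\Sigma)$. Consider the feasible set $$\{e\in\mathbb{R}^d:\ \mathbb{P}[Z^\top e\ge\alpha]\ge1-\delta\}$$ of the agent's problem $\min_e \mathrm{Cost}(e)$ subject to this constraint. The problem is feasible (the set is nonempty) when $\delta>\Phi\big(-\|\Sigma^{-1/2}\mu\|_2\big)$, and infeasible otherwise, where $\Phi$ is the standard normal CDF.
   Context: $Z$ plays the role of the agent's Gaussian belief about the vector $\mathbb{C}h$ of total feature contributions; $\alpha>0$ is the amount by which the agent's score falls short of the threshold (standing assumption in the paper), and $1-\delta$ is the required probability of passing the classifier. *)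

From HB Require Import structures.
From mathcomp Require Import all_boot all_order all_algebra.
From mathcomp Require Import all_classical all_reals all_analysis.
Set Implicit Arguments.
Unset Strict Implicit.
Unset Printing Implicit Defensive.
Import Order.TTheory GRing.Theory Num.Theory.
Local Open Scope classical_set_scope.
Local Open Scope ring_scope.

Definition qform {R : realType} {n : nat} (A : 'M[R]_n) (x : 'cV[R]_n) : R :=
  (x^T *m A *m x) 0 0.

Definition dotv {R : realType} {n : nat} (u v : 'cV[R]_n) : R := (u^T *m v) 0 0.

Definition posdef {R : realType} {n : nat} (A : 'M[R]_n) : Prop :=
  A^T = A /\ (forall x : 'cV[R]_n, x != 0 -> 0 < qform A x).

Definition norm2 {R : realType} {n : nat} (v : 'cV[R]_n) : R :=
  Num.sqrt (\sum_(i < n) v i 0 ^+ 2).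

Definition Phi {R : realType} (x : R) : R :=
  fine (normal_prob 0 1 `]-oo, x]).

Definition gauss_law {R : realType} (m s2 : R) : set R -> \bar R :=
  if s2 == 0 then (fun A => (\1_A m)%:E) else normal_prob m (Num.sqrt s2).

Definition is_gaussian_vector {R : realType} {dT : measure_display}
    {T : measurableType dT} (P : probability T R) {n : nat}
    (Z : T -> 'cV[R]_n) (mu : 'cV[R]_n) (Sigma : 'M[R]_n) : Prop :=
  forall v : 'cV[R]_n,
    measurable_fun setT (fun w => dotv v (Z w)) /\
    forall A : set R, measurable A ->
      P ((fun w => dotv v (Z w)) @^-1` A) = gauss_law (dotv v mu) (qform Sigma v) A.

Definition feasible_set {R : realType} {dT : measure_display}
    {T : measurableType dT} (P : probability T R) {n : nat}
    (Z : T -> 'cV[R]_n) (alpha delta : R) : set 'cV[R]_n :=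
  [set e | (P [set w | (alpha <= dotv (Z w) e)%R] >= (1 - delta)%:E)%E].

(* For [e != 0] the score [Z^T e] is normal with mean [e^T mu] and variance
   [e^T Sigma e], so [e] is feasible iff [Phi] of the standardized threshold
   [(alpha - e^T mu) / sqrt (e^T Sigma e)] is at most [delta]; [e = 0] is never
   feasible.  Whitening by [S = Sigma^-1/2] gives [e^T mu = <S Sigma e, S mu>]
   and [e^T Sigma e = |S Sigma e|^2], so by Cauchy-Schwarz and [alpha > 0] the
   standardized threshold is always strictly above [- |S mu|], while along the
   ray through [Sigma^-1 mu] it comes arbitrarily close to it.  As [Phi] is
   strictly increasing and 1-Lipschitz, a feasible [e] exists iff
   [Phi (- |S mu|) < delta]. *)

From HB Require Import structures.
From mathcomp Require Import all_boot all_order all_algebra.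
From mathcomp Require Import all_classical all_reals all_analysis.
From mathcomp Require Import ring lra measurable_realfun.
Import Order.TTheory GRing.Theory Num.Theory.
Import numFieldNormedType.Exports.
Set Implicit Arguments.
Unset Strict Implicit.
Unset Printing Implicit Defensive.
Local Open Scope classical_set_scope.
Local Open Scope ring_scope.

Section standard_normal.
Variable R : realType.
Local Notation N := (@normal_prob R 0 1).

Lemma normal_pdf_affine (m s x : R) : 0 < s ->
  normal_pdf m s (s * x + m) * s = normal_pdf 0 1 x.
Proof.
move=> s_gt0; rewrite /normal_pdf gt_eqF // oner_eq0 /normal_peak /normal_fun.
have -> : Num.sqrt (s ^+ 2 * pi *+ 2) = s * Num.sqrt (1 ^+ 2 * pi *+ 2).
  by rewrite expr1n mul1r -mulrnAr sqrtrM ?sqr_ge0 // sqrtr_sqr gtr0_norm.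
have -> : - (s * x + m - m) ^+ 2 / (s ^+ 2 *+ 2) = - (x - 0) ^+ 2 / (1 ^+ 2 *+ 2).
  by rewrite addrK subr0; field; rewrite gt_eqF.
have sqrt_neq0 : Num.sqrt (1 ^+ 2 * pi *+ 2) != 0 :> R.
  by rewrite gt_eqF // sqrtr_gt0 expr1n mul1r pmulrn_lgt0 // pi_gt0.
by rewrite invfM; field; rewrite sqrt_neq0 gt_eqF.
Qed.

Lemma normal_prob_itv_ge_affine (m s a : R) : 0 < s ->
  normal_prob m s `[a, +oo[ = N `[(a - m) / s, +oo[.
Proof.
move=> s_gt0; pose F x := s * x + m.
have F'E : F^`()%classic = cst s.
  apply/funext => x; rewrite derive1E deriveD // deriveM // !derive_cst derive_id.
  by rewrite scaler0 !addr0 /cst; exact: mulr1.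
have Fa : F ((a - m) / s) = a by rewrite /F; field; rewrite gt_eqF.
rewrite /normal_prob -[in LHS]Fa (@increasing_ge0_integration_by_substitutiony _ F).
- apply: eq_integral => x _ /=; rewrite F'E /= !fctE; congr EFin.
  exact: normal_pdf_affine.
- by move=> x y _ _ xy; rewrite /F ltrD2r ltr_pM2l.
- by rewrite F'E => x _; exact: cvg_cst.
- by rewrite F'E; exact: is_cvg_cst.
- by rewrite F'E; exact: is_cvg_cst.
- split; first by move=> x _; apply: derivableD => //; apply: derivableM.
  apply: cvg_at_right_filter; rewrite /F.
  by apply: continuousD; [apply: continuousM => //; exact: cvg_cst | exact: cvg_cst].
- have -> : F = (fun x => (x + m / s) * s).
    by apply/funext => x; rewrite /F; field; rewrite gt_eqF.
  by apply: gt0_cvgMly => //; exact: cvg_addrr.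
- by apply: continuous_subspaceT; apply: continuous_normal_pdf; rewrite gt_eqF.
- by move=> x _; exact: normal_pdf_ge0.
Qed.

Lemma PhiE (x : R) : (Phi x)%:E = N `]-oo, x].
Proof. by rewrite /Phi fineK // fin_num_measure. Qed.

Lemma Phi_itv_oc (x y : R) : x <= y -> Phi y = Phi x + fine (N `]x, y]).
Proof.
move=> xy; apply: EFin_inj; rewrite EFinD !PhiE fineK ?fin_num_measure //.
rewrite (@itv_bndbnd_setU _ _ -oo%O (BRight x) (BRight y)) // measureU //.
by apply/seteqP; split => z //= []; rewrite !in_itv /= => ? /andP[? ?]; lra.
Qed.

Lemma lebesgue_measure_itv_oc (x y : R) : x <= y ->
  lebesgue_measure `]x, y] = (y - x)%:E.
Proof.
move=> xy; rewrite lebesgue_measure_itv /= lte_fin.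
by case: ltgtP xy => // <- _; rewrite subrr.
Qed.

Lemma normal_prob_itv_oc_le (x y : R) : x <= y -> (N `]x, y] <= (y - x)%:E)%E.
Proof.
move=> xy; have peak_le1 : normal_peak 1 <= 1 :> R.
  have pi_ge2 := pi_ge2 R; have pi2_gt0 : 0 < pi + pi :> R by lra.
  rewrite /normal_peak expr1n mul1r mulr2n invf_le1 ?sqrtr_gt0 //.
  by rewrite -sqrtr1 ler_sqrt //; lra.
rewrite /normal_prob.
apply: (@le_trans _ _ (\int[lebesgue_measure]_(z in `]x, y]) (cst 1%:E z))%E); last first.
  by rewrite integral_cst //= mul1e lebesgue_measure_itv_oc.
apply: ge0_le_integral => //.
- by move=> z _; rewrite lee_fin normal_pdf_ge0.
- by apply/measurable_EFinP/measurable_funTS; exact: measurable_normal_pdf.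
- by move=> z _; rewrite lee_fin (le_trans (normal_pdf_ub _ _ (oner_neq0 R))).
Qed.

Lemma sqr_le_sqrD_itv (x y z : R) : x < z <= y -> z ^+ 2 <= x ^+ 2 + y ^+ 2.
Proof.
move=> /andP[xz zy]; have [z_ge0|z_lt0] := leP 0 z.
- have : 0 <= (y - z) * (y + z) by apply: mulr_ge0; lra.
  by have := sqr_ge0 x; rewrite !expr2; nra.
- have : 0 <= (z - x) * (- x - z) by apply: mulr_ge0; lra.
  by have := sqr_ge0 y; rewrite !expr2; nra.
Qed.

(* Every [z] in [`]x, y]] has [z ^+ 2 <= x ^+ 2 + y ^+ 2], which bounds the
   density from below by a positive constant on the whole interval. *)
Lemma normal_prob_itv_oc_gt0 (x y : R) : x < y -> (0 < N `]x, y])%E.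
Proof.
move=> xy; pose c := normal_peak (1 : R) * expR (- (x ^+ 2 + y ^+ 2) / (1 ^+ 2 *+ 2)).
have c_gt0 : 0 < c by rewrite mulr_gt0 ?expR_gt0 // normal_peak_gt0 // oner_neq0.
apply: (@lt_le_trans _ _ (\int[lebesgue_measure]_(z in `]x, y]) c%:E)%E).
  by rewrite integral_cst //= lebesgue_measure_itv_oc ?ltW // -EFinM lte_fin
    mulr_gt0 // subr_gt0.
apply: ge0_le_integral => //.
- by move=> z _; rewrite lee_fin ltW.
- by apply/measurable_EFinP/measurable_funTS; exact: measurable_normal_pdf.
- move=> z; rewrite /= in_itv /= => xzy; rewrite lee_fin /normal_pdf oner_eq0 /c.
  rewrite ler_pM2l ?normal_peak_gt0 ?oner_neq0 // /normal_fun ler_expR !mulNr lerN2.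
  rewrite ler_pM2r ?invr_gt0 ?pmulrn_lgt0 ?expr1n // subr0.
  exact: sqr_le_sqrD_itv.
Qed.

Lemma Phi_ltr (x y : R) : x < y -> Phi x < Phi y.
Proof.
move=> xy; rewrite (Phi_itv_oc (ltW xy)) ltrDl -lte_fin fineK ?fin_num_measure //.
exact: normal_prob_itv_oc_gt0.
Qed.

Lemma Phi_ler (x y : R) : x <= y -> Phi x <= Phi y.
Proof. by rewrite le_eqVlt => /predU1P[->|/Phi_ltr/ltW]. Qed.

Lemma Phi_lipschitz (x y : R) : x <= y -> Phi y - Phi x <= y - x.
Proof.
move=> xy; rewrite (Phi_itv_oc xy) addrAC subrr add0r.
by rewrite -lee_fin fineK ?fin_num_measure // normal_prob_itv_oc_le.
Qed.

Lemma normal_prob_itv_ge (b : R) : N `[b, +oo[ = (1 - Phi b)%:E.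
Proof.
have -> : `[b, +oo[%classic = [set b] `|` ~` `]-oo, b].
  apply/seteqP; split => z /=; rewrite !in_itv /= ?andbT.
    rewrite le_eqVlt => /predU1P[->|bz]; [by left | by right; apply/negP; rewrite -ltNge].
  by case=> [->|/negP]; rewrite ?lexx // -ltNge => /ltW.
rewrite measureU //; last first.
- by apply/seteqP; split => z //= [->]; rewrite in_itv /= lexx.
- exact: measurableC.
have N_set1 : N [set b] = 0%E.
  apply: (null_content_dominatesP _ _).1 (normal_prob_dominates 0 1) _ _ _ => //.
  exact: lebesgue_measure_set1.
change (N [set b] + N (~` `]-oo, b]) = (1 - Phi b)%:E)%E.
by rewrite N_set1 add0e probability_setC // EFinB PhiE.
Qed.

Lemma gauss_law_itv_ge (m q a : R) : 0 < q ->
  gauss_law m q `[a, +oo[ = (1 - Phi ((a - m) / Num.sqrt q))%:E.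
Proof.
move=> q_gt0; rewrite /gauss_law gt_eqF // normal_prob_itv_ge_affine ?sqrtr_gt0 //.
exact: normal_prob_itv_ge.
Qed.

End standard_normal.

Section dot_product.
Variables (R : realType) (n : nat).
Implicit Types (u v w : 'cV[R]_n) (A : 'M[R]_n).

Lemma dotvE u v : dotv u v = \sum_i u i 0 * v i 0.
Proof. by rewrite /dotv mxE; apply: eq_bigr => i _; rewrite mxE. Qed.

Lemma dotvC u v : dotv u v = dotv v u.
Proof. by rewrite !dotvE; apply: eq_bigr => i _; rewrite mulrC. Qed.

Lemma dotvZl t u v : dotv (t *: u) v = t * dotv u v.
Proof. by rewrite !dotvE mulr_sumr; apply: eq_bigr => i _; rewrite mxE mulrA. Qed.

Lemma dotv0r u : dotv u 0 = 0.
Proof. by rewrite dotvE big1 // => i _; rewrite mxE mulr0. Qed.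

Lemma dotv_ge0 u : 0 <= dotv u u.
Proof. by rewrite dotvE sumr_ge0 // => i _; rewrite -expr2 sqr_ge0. Qed.

Lemma dotv_mulmxr u A v : dotv u (A *m v) = dotv (A^T *m u) v.
Proof. by rewrite /dotv trmx_mul trmxK mulmxA. Qed.

Lemma norm2E u : norm2 u = Num.sqrt (dotv u u).
Proof. by rewrite /norm2 dotvE; congr Num.sqrt; apply: eq_bigr => i _; rewrite expr2. Qed.

Lemma qformE A u : qform A u = dotv u (A *m u).
Proof. by rewrite /qform /dotv mulmxA. Qed.

Lemma qformZ A t u : qform A (t *: u) = t ^+ 2 * qform A u.
Proof. by rewrite !qformE -scalemxAr dotvZl dotvC dotvZl dotvC mulrA. Qed.

(* The discriminant of the nonnegative quadratic [t |-> |t u - w|^2]. *)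
Lemma dotv_sqr_le u w : dotv u w ^+ 2 <= dotv u u * dotv w w.
Proof.
set a := dotv u u; set b := dotv w w; set c := dotv u w.
have quad_ge0 t : 0 <= t ^+ 2 * a - 2 * t * c + b.
  have -> : t ^+ 2 * a - 2 * t * c + b = \sum_i (t * u i 0 - w i 0) ^+ 2.
    rewrite /a /b /c !dotvE !mulr_sumr -sumrB -big_split /=.
    by apply: eq_bigr => i _; ring.
  by rewrite sumr_ge0 // => i _; rewrite sqr_ge0.
have [a0|a_neq0] := eqVneq a 0.
  have [c0|c_neq0] := eqVneq c 0; first by rewrite c0 a0 expr0n mul0r.
  have := quad_ge0 ((b + 1) / (2 * c)); rewrite a0 mulr0 sub0r.
  have -> : 2 * ((b + 1) / (2 * c)) * c = b + 1 by field.
  lra.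
have a_gt0 : 0 < a by rewrite lt_def a_neq0 dotv_ge0.
have := quad_ge0 (c / a).
have -> : (c / a) ^+ 2 * a - 2 * (c / a) * c + b = b - c ^+ 2 / a by field.
by rewrite subr_ge0 ler_pdivrMr // mulrC.
Qed.

Lemma dotv_le_norm2 u w : dotv u w <= norm2 u * norm2 w.
Proof.
rewrite !norm2E -sqrtrM ?dotv_ge0 // (le_trans (ler_norm _)) //.
by rewrite -sqrtr_sqr ler_sqrt ?mulr_ge0 ?dotv_ge0 ?dotv_sqr_le.
Qed.

Lemma posdef_unitmx A : posdef A -> A \in unitmx.
Proof.
case=> _ A_pd; rewrite unitmxE unitfE; apply/negP => /det0P[v v_neq0 vA].
have := A_pd v^T; rewrite trmx_eq0 v_neq0 => /(_ isT).
by rewrite /qform trmxK vA mul0mx mxE ltxx.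
Qed.

End dot_product.

Section whitening.
Variables (R : realType) (n : nat) (Sigma S : 'M[R]_n).
Hypotheses (S_sym : S^T = S) (S_sqr : S *m S = invmx Sigma)
  (Sigma_unit : Sigma \in unitmx).

Lemma dotv_whiten (e y : 'cV[R]_n) : dotv (S *m (Sigma *m e)) (S *m y) = dotv e y.
Proof. by rewrite dotv_mulmxr S_sym mulmxA S_sqr mulKmx. Qed.

Lemma qform_whiten (e : 'cV[R]_n) :
  qform Sigma e = dotv (S *m (Sigma *m e)) (S *m (Sigma *m e)).
Proof. by rewrite dotv_whiten qformE. Qed.

Lemma dotv_le_whiten (e mu : 'cV[R]_n) :
  dotv e mu <= Num.sqrt (qform Sigma e) * norm2 (S *m mu).
Proof. by rewrite -dotv_whiten qform_whiten -norm2E dotv_le_norm2. Qed.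

(* Equality case of Cauchy-Schwarz, attained at [e = Sigma^-1 mu]; when
   [mu = 0] any nonzero [e] works, and one exists because [0 < n]. *)
Lemma exists_dotv_ge_whiten (mu : 'cV[R]_n) : (0 < n)%N ->
  exists2 e, e != 0 & norm2 (S *m mu) * Num.sqrt (qform Sigma e) <= dotv e mu.
Proof.
move=> n_gt0; have [->|mu_neq0] := eqVneq mu 0.
  exists (const_mx 1); last by rewrite mulmx0 norm2E !dotv0r sqrtr0 mul0r.
  by apply/eqP => /matrixP /(_ (Ordinal n_gt0) 0) /eqP; rewrite !mxE oner_eq0.
have Sigma_e : Sigma *m (S *m (S *m mu)) = mu by rewrite [S *m _]mulmxA S_sqr mulKVmx.
exists (S *m (S *m mu)).
  apply: contra_neq mu_neq0 => SSmu0.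
  by rewrite -Sigma_e SSmu0 mulmx0.
rewrite qform_whiten -[dotv _ mu]dotv_whiten Sigma_e -norm2E.
by rewrite -expr2 norm2E sqr_sqrtr ?dotv_ge0.
Qed.

End whitening.

Definition std_threshold {R : realType} {n : nat} (mu : 'cV[R]_n)
    (Sigma : 'M[R]_n) (alpha : R) (e : 'cV[R]_n) : R :=
  (alpha - dotv e mu) / Num.sqrt (qform Sigma e).

Section std_threshold_bounds.
Variables (R : realType) (n : nat) (mu : 'cV[R]_n) (Sigma S : 'M[R]_n) (alpha : R).
Hypotheses (Sigma_pd : posdef Sigma) (S_sym : S^T = S)
  (S_sqr : S *m S = invmx Sigma) (alpha_gt0 : 0 < alpha).
Local Notation K := (norm2 (S *m mu)).

Lemma std_threshold_gt (e : 'cV[R]_n) : e != 0 -> - K < std_threshold mu Sigma alpha e.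
Proof.
move=> e_neq0; have Sigma_unit := posdef_unitmx Sigma_pd.
have s_gt0 : 0 < Num.sqrt (qform Sigma e).
  by rewrite sqrtr_gt0; exact: Sigma_pd.2.
have := dotv_le_whiten S_sym S_sqr Sigma_unit e mu.
by rewrite /std_threshold ltr_pdivlMr // mulNr mulrC; move: alpha_gt0; lra.
Qed.

Lemma std_threshold_le (c : R) : (0 < n)%N -> - K < c ->
  exists2 e, e != 0 & std_threshold mu Sigma alpha e <= c.
Proof.
move=> n_gt0 c_gt; have [e e_neq0 e_aligned] :=
  exists_dotv_ge_whiten S_sym S_sqr (posdef_unitmx Sigma_pd) mu n_gt0.
set s := Num.sqrt (qform Sigma e) in e_aligned.
have s_gt0 : 0 < s by rewrite sqrtr_gt0; exact: Sigma_pd.2.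
have cK_gt0 : 0 < c + K by lra.
have [t t_gt0 t_alpha] : exists2 t, 0 < t & t * (s * (c + K)) = alpha.
  exists (alpha / (s * (c + K))); first by rewrite divr_gt0 // mulr_gt0.
  by rewrite divfK // gt_eqF // mulr_gt0.
exists (t *: e); first by rewrite scalemx_eq0 negb_or gt_eqF.
rewrite /std_threshold qformZ sqrtrM ?sqr_ge0 // sqrtr_sqr gtr0_norm // dotvZl.
rewrite -/s ler_pdivrMr; last exact: mulr_gt0.
have : 0 <= t * (dotv e mu - K * s) by rewrite mulr_ge0 ?subr_ge0 // ltW.
by move: t_alpha; nra.
Qed.

End std_threshold_bounds.

Lemma gaussian_vector_prob_ge (R : realType) (n : nat) (dT : measure_display)
    (T : measurableType dT) (P : probability T R) (Z : T -> 'cV[R]_n)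
    (mu : 'cV[R]_n) (Sigma : 'M[R]_n) (alpha : R) (e : 'cV[R]_n) :
  posdef Sigma -> is_gaussian_vector P Z mu Sigma -> e != 0 ->
  P [set w | alpha <= dotv (Z w) e] = (1 - Phi (std_threshold mu Sigma alpha e))%:E.
Proof.
move=> [_ Sigma_pd] gaussZ e_neq0.
have -> : [set w | alpha <= dotv (Z w) e] = (fun w => dotv e (Z w)) @^-1` `[alpha, +oo[.
  by apply/seteqP; split => w /=; rewrite in_itv /= andbT dotvC.
by rewrite (gaussZ e).2 // gauss_law_itv_ge // Sigma_pd.
Qed.

Lemma feasible_setP (R : realType) (n : nat) (dT : measure_display)
    (T : measurableType dT) (P : probability T R) (Z : T -> 'cV[R]_n)
    (mu : 'cV[R]_n) (Sigma : 'M[R]_n) (alpha delta : R) (e : 'cV[R]_n) :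
  posdef Sigma -> is_gaussian_vector P Z mu Sigma -> 0 < alpha -> delta < 1 ->
  feasible_set P Z alpha delta e <->
  e != 0 /\ Phi (std_threshold mu Sigma alpha e) <= delta.
Proof.
move=> Sigma_pd gaussZ alpha_gt0 delta_lt1; rewrite /feasible_set /=.
have [->|e_neq0] := eqVneq e 0.
  have -> : [set w | alpha <= dotv (Z w) 0] = set0.
    by apply/seteqP; split => w //=; rewrite dotv0r; lra.
  by rewrite measure0 lee_fin; split => [|[]//]; lra.
rewrite (gaussian_vector_prob_ge alpha Sigma_pd gaussZ e_neq0) lee_fin lerD2l lerN2.
by split=> [|[]].
Qed.

Theorem lemma5 (R : realType) (n : nat) (dT : measure_display)
    (T : measurableType dT) (P : probability T R)
    (mu : 'cV[R]_n) (Sigma : 'M[R]_n) (alpha delta : R)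
    (Z : T -> 'cV[R]_n) (S : 'M[R]_n) :
  (0 < n)%N ->
  posdef Sigma ->
  0 < alpha ->
  0 < delta < 1 ->
  is_gaussian_vector P Z mu Sigma ->
  (* S = Sigma^{-1/2}: the symmetric positive definite square root of Sigma^{-1} *)
  posdef S -> S *m S = invmx Sigma ->
  (feasible_set P Z alpha delta !=set0 <-> Phi (- norm2 (S *m mu)) < delta).
Proof.
move=> n_gt0 Sigma_pd alpha_gt0 /andP[_ delta_lt1] gaussZ [S_sym _] S_sqr.
have feasibleP e := feasible_setP e Sigma_pd gaussZ alpha_gt0 delta_lt1.
split=> [[e /feasibleP[e_neq0 Phi_le]] | Phi_lt].
  apply: lt_le_trans Phi_le; apply: Phi_ltr.
  exact: std_threshold_gt.
pose c := - norm2 (S *m mu) + (delta - Phi (- norm2 (S *m mu))).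
have c_gt : - norm2 (S *m mu) < c by rewrite /c; lra.
have [e e_neq0 e_le] := std_threshold_le Sigma_pd S_sym S_sqr alpha_gt0 n_gt0 c_gt.
exists e; apply/feasibleP; split => //.
have := Phi_lipschitz (ltW c_gt); have := Phi_ler e_le; rewrite /c; lra.
Qed.
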